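(* Let $p\ge1$ and $0<\nu\le1/2$. Then $$\sup_{0<y<(2+\nu/p^2)\,\omega_{p,\nu}}\left|\frac{1-y^{-1}P_{p,\nu}(y)}{P_{p,\nu}(y)}\right|\le\frac{\nu+1}{2\nu}.$$
   Context: $T_p$ denotes the Chebyshev polynomial of the first kind of degree $p$. $\delta_{p,\nu}:=1+\nu/p^2$, $\omega_{p,\nu}:=2T_p'(\delta_{p,\nu})/T_p(\delta_{p,\nu})$, and $P_{p,\nu}(x):=2\big(1-T_p(\delta_{p,\nu}-x/\omega_{p,\nu})/T_p(\delta_{p,\nu})\big)$. *)

From mathcomp Require Import all_boot all_order all_algebra.
From mathcomp Require Import reals.
Set Implicit Arguments. Unset Strict Implicit. Unset Printing Implicit Defensive.
Import Order.TTheory GRing.Theory Num.Theory.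
Local Open Scope ring_scope.

Section Cheb.
Variable R : realType.

Fixpoint cheb (n : nat) : {poly R} :=
  match n with
  | 0%N => 1
  | 1%N => 'X
  | (m.+1 as m').+1 => 2%:P * 'X * cheb m' - cheb m
  end.

Definition delta_pn (p : nat) (nu : R) : R := 1 + nu / (p%:R ^+ 2).

Definition omega_pn (p : nat) (nu : R) : R :=
  2 * (cheb p)^`().[delta_pn p nu] / (cheb p).[delta_pn p nu].

Definition P_pn (p : nat) (nu : R) (x : R) : R :=
  2 * (1 - (cheb p).[delta_pn p nu - x / omega_pn p nu] / (cheb p).[delta_pn p nu]).

End Cheb.

From mathcomp Require Import all_boot all_order all_algebra.
From mathcomp Require Import reals.
From mathcomp Require Import ring lra.
Set Implicit Arguments. Unset Strict Implicit. Unset Printing Implicit Defensive.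
Import Order.TTheory GRing.Theory Num.Theory.
Local Open Scope ring_scope.

(* Proof of Lemma A.5.  Write h = nu / p^2, so delta = 1 + h, and let
   A = T_p(1 + h), B = T_p'(1 + h), C = T_p''(1 + h); then omega = 2 B / A.
   For 0 < y < (2 + h) omega put t = delta - y / omega, which lies in
   (-1, 1 + h), u = 1 + h - t and D = A - T_p(t).  Then y = 2 B u / A and
   P(y) = 2 D / A, so the quantity to bound is 1/P - 1/y = (A/D - A/(B u)) / 2.
   The file develops:
   - recurrences for T_n, T_n', T_n'', the Pell identity (|T_n| <= 1 on
     [-1, 1]), the values T_n(1) = 1, T_n'(1) = n^2, and growth bounds for
     T_n(1 + h) and T_n''(1 + h) when h n^2 <= 1/2;
   - convexity properties of polynomials with nonnegative coefficients, and
     the fact that the shifted polynomial T_n(1 + z) is one of them;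
   - from these, bounds on A, B, C and on D for t in (1, 1 + h];
   - the estimate |A/D - A/(B u)| <= (nu + 1) / nu, split at t = 1: for t <= 1
     both quotients lie in (0, (nu + 1) / nu], for t > 1 their difference is
     at most A C / p^4 by convexity.  The theorem is then a rewriting. *)

Section Chebyshev.
Variable R : realType.
Local Notation T := (@cheb R).
Implicit Types (n : nat) (h t x : R).

Definition cheb_val n x : R := (T n).[x].
Definition cheb_der n x : R := (T n)^`().[x].
Definition cheb_der2 n x : R := (T n)^`()^`().[x].

Lemma chebSS n : T n.+2 = 2%:P * 'X * T n.+1 - T n.
Proof. by []. Qed.

Lemma cheb_valSS n x : cheb_val n.+2 x = 2 * x * cheb_val n.+1 x - cheb_val n x.
Proof. by rewrite /cheb_val chebSS !hornerE. Qed.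

Lemma cheb_derSS n x :
  cheb_der n.+2 x = 2 * cheb_val n.+1 x + 2 * x * cheb_der n.+1 x - cheb_der n x.
Proof. rewrite /cheb_der /cheb_val chebSS !derivE !hornerE; ring. Qed.

Lemma cheb_der2SS n x :
  cheb_der2 n.+2 x = 4 * cheb_der n.+1 x + 2 * x * cheb_der2 n.+1 x - cheb_der2 n x.
Proof. rewrite /cheb_der2 /cheb_der chebSS !derivE !hornerE /=; ring. Qed.

Lemma cheb_val0 x : cheb_val 0 x = 1. Proof. by rewrite /cheb_val /= hornerE. Qed.
Lemma cheb_val1 x : cheb_val 1 x = x. Proof. by rewrite /cheb_val /= hornerE. Qed.
Lemma cheb_der0 x : cheb_der 0 x = 0. Proof. by rewrite /cheb_der /= derivE hornerE. Qed.
Lemma cheb_der1 x : cheb_der 1 x = 1. Proof. by rewrite /cheb_der /= derivE hornerE. Qed.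
Lemma cheb_der20 x : cheb_der2 0 x = 0. Proof. by rewrite /cheb_der2 /= !derivE hornerE. Qed.
Lemma cheb_der21 x : cheb_der2 1 x = 0. Proof. by rewrite /cheb_der2 /= !derivE hornerE. Qed.

(* Pell equation T_n(t)^2 - (t^2 - 1) U_{n-1}(t)^2 = 1, where the witness v
   plays the role of the Chebyshev polynomial of the second kind U_{n-1}(t). *)
Lemma cheb_pell t n : exists v : R,
  cheb_val n t ^+ 2 - (t ^+ 2 - 1) * v ^+ 2 = 1 /\
  cheb_val n.+1 t = t * cheb_val n t + (t ^+ 2 - 1) * v.
Proof.
elim: n => [|n [v [pell_n rec_n]]].
  by exists 0; rewrite cheb_val0 cheb_val1 expr0n /= mulr0 subr0 mulr1 addr0 expr1n.
exists (t * v + cheb_val n t); rewrite cheb_valSS rec_n; split; last by ring.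
by rewrite -[RHS]pell_n; ring.
Qed.

(* On [-1, 1] the term (1 - t^2) v^2 is nonnegative, so T_n is bounded by 1. *)
Lemma cheb_val_le1 t n : -1 <= t -> t <= 1 -> `|cheb_val n t| <= 1.
Proof.
move=> t_ge t_le; have [v [pell _]] := cheb_pell t n.
have t2_le1 : t ^+ 2 <= 1 by nra.
have rest_ge0 : 0 <= (1 - t ^+ 2) * v ^+ 2 by rewrite mulr_ge0 ?sqr_ge0 // subr_ge0.
by rewrite -sqrtr_sqr -sqrtr1 ler_sqrt //; lra.
Qed.

Lemma cheb_at1 n : cheb_val n 1 = 1 /\ cheb_der n 1 = n%:R ^+ 2.
Proof.
suff [? _ ? _] : [/\ cheb_val n 1 = 1, cheb_val n.+1 1 = 1,
                   cheb_der n 1 = n%:R ^+ 2 & cheb_der n.+1 1 = n.+1%:R ^+ 2] by [].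
elim: n => [|n [v_n v_n1 d_n d_n1]].
  by rewrite cheb_val0 cheb_val1 cheb_der0 cheb_der1 expr0n expr1n.
split => //; first by rewrite cheb_valSS v_n v_n1; ring.
by rewrite cheb_derSS v_n1 d_n d_n1 -!natr1; ring.
Qed.

(* Growth of T_n and T_n'' just to the right of 1: if h n^2 <= 1/2 then
   T_n(1 + h) <= 1 + 2 h n^2 and T_n''(1 + h) <= 16 n^4 / 11.  The induction
   also tracks T_n' and the forward differences of all three sequences. *)
Lemma cheb_growth h n : 0 <= h -> h * n%:R ^+ 2 <= 1 / 2 ->
  cheb_val n (1 + h) <= 1 + 2 * h * n%:R ^+ 2 /\
  cheb_der2 n (1 + h) <= 16 / 11 * n%:R ^+ 4.
Proof.
move=> h_ge0; set x := 1 + h.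
suff inv : h * n%:R ^+ 2 <= 1 / 2 ->
  cheb_val n x <= 1 + 2 * h * n%:R ^+ 2 /\
  cheb_val n.+1 x - cheb_val n x <= h * (1 + 4 * n%:R) /\
  cheb_der n x <= 4 * n%:R ^+ 2 /\
  cheb_der n.+1 x - cheb_der n x <= 4 * (2 * n%:R + 1) /\
  cheb_der2 n x <= 16 / 11 * n%:R ^+ 4 /\
  cheb_der2 n.+1 x - cheb_der2 n x <= 16 / 11 * ((n%:R + 1) ^+ 4 - n%:R ^+ 4).
  by move=> /inv [? [_ [_ [_ [? _]]]]].
elim: n => [|n IH] hn.
  rewrite cheb_val0 cheb_val1 cheb_der0 cheb_der1 cheb_der20 cheb_der21 /x /=.
  by repeat split; lra.
rewrite -[n.+1%:R]natr1 in hn *; have m_ge0 : (0 : R) <= n%:R by [].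
have hn' : h * n%:R ^+ 2 <= 1 / 2.
  suff : h * n%:R ^+ 2 <= h * (n%:R + 1) ^+ 2 by lra.
  by rewrite ler_wpM2l // lerXn2r ?nnegrE //; lra.
have [A0 [DA [B0 [DB [C0 DC]]]]] := IH hn'.
rewrite cheb_valSS cheb_derSS cheb_der2SS.
move: A0 DA B0 DB C0 DC hn m_ge0.
set m := (n%:R : R).
set a0 := cheb_val n x; set a1 := cheb_val n.+1 x.
set b0 := cheb_der n x; set b1 := cheb_der n.+1 x.
set c0 := cheb_der2 n x; set c1 := cheb_der2 n.+1 x.
move=> A0 DA B0 DB C0 DC hn m_ge0.
have A1 : a1 <= 1 + 2 * h * (m + 1) ^+ 2 by nra.
have A2 : a1 <= 2 by lra.
have B1 : b1 <= 4 * (m + 1) ^+ 2 by nra.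
have C1 : c1 <= 16 / 11 * (m + 1) ^+ 4 by nra.
have F1 : h * a1 <= h * 2 by apply: ler_wpM2l.
have F2 : h * b1 <= h * (4 * (m + 1) ^+ 2) by apply: ler_wpM2l.
have F3 : h * c1 <= h * (16 / 11 * (m + 1) ^+ 4) by apply: ler_wpM2l.
have F4 : h * (m + 1) ^+ 2 * (m + 1) ^+ 2 <= 1 / 2 * (m + 1) ^+ 2.
  by apply: ler_wpM2r => //; exact: sqr_ge0.
rewrite /x; repeat split; nra.
Qed.
End Chebyshev.

Section NonnegCoef.
Variable R : realFieldType.
Implicit Types (g k : {poly R}) (a b : R).

Definition nonneg_coef g := forall i, 0 <= g`_i.

Lemma nonneg_coefD g k : nonneg_coef g -> nonneg_coef k -> nonneg_coef (g + k).
Proof. by move=> g_ge0 k_ge0 i; rewrite coefD addr_ge0. Qed.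

Lemma nonneg_coefXM g : nonneg_coef g -> nonneg_coef ('X * g).
Proof. by move=> g_ge0 [|i]; rewrite coefXM /=. Qed.

Lemma nonneg_coefMn g m : nonneg_coef g -> nonneg_coef (g *+ m).
Proof. by move=> g_ge0 i; rewrite coefMn mulrn_wge0. Qed.

Lemma nonneg_coef_deriv g : nonneg_coef g -> nonneg_coef g^`().
Proof. by move=> g_ge0 i; rewrite coef_deriv mulrn_wge0. Qed.

Lemma nonneg_coef_horner_split q c :
  nonneg_coef (q * 'X + c%:P) -> nonneg_coef q /\ 0 <= c.
Proof.
move=> g_ge0; split; last by have := g_ge0 0%N; rewrite coefD coefMX coefC add0r.
by move=> i; have := g_ge0 i.+1; rewrite coefD coefMX coefC addr0.
Qed.

Lemma nonneg_coef_horner g a : nonneg_coef g -> 0 <= a -> 0 <= g.[a].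
Proof.
elim/poly_ind: g => [|q c IH] g_ge0 a_ge0; first by rewrite horner0.
have [q_ge0 c_ge0] := nonneg_coef_horner_split g_ge0.
rewrite hornerMXaddC addr_ge0 // mulr_ge0 //; exact: IH.
Qed.

Lemma nonneg_coef_secant g a b : nonneg_coef g -> 0 <= a -> a <= b ->
  g^`().[a] * (b - a) <= g.[b] - g.[a] /\ g.[b] - g.[a] <= g^`().[b] * (b - a).
Proof.
elim/poly_ind: g => [|q c IH] g_ge0 a_ge0 a_le_b.
  by rewrite deriv0 !horner0; lra.
have [q_ge0 _] := nonneg_coef_horner_split g_ge0.
have [lo hi] := IH q_ge0 a_ge0 a_le_b.
have dqa : 0 <= q^`().[a] by apply/nonneg_coef_horner/a_ge0/nonneg_coef_deriv.
have dqb : 0 <= q^`().[b] by apply/nonneg_coef_horner/(le_trans a_ge0 a_le_b)/nonneg_coef_deriv.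
rewrite derivMXaddC !hornerMXaddC !hornerE.
have P1 : 0 <= (q.[b] - q.[a] - q^`().[a] * (b - a)) * b by rewrite mulr_ge0 //; lra.
have P2 : 0 <= q^`().[a] * (b - a) * (b - a) by rewrite !mulr_ge0 //; lra.
have P3 : 0 <= (q^`().[b] * (b - a) - (q.[b] - q.[a])) * a by rewrite mulr_ge0 //; lra.
have P4 : 0 <= q^`().[b] * (b - a) * (b - a) by rewrite !mulr_ge0 //; lra.
split; lra.
Qed.

Lemma nonneg_coef_mono g a b : nonneg_coef g -> 0 <= a -> a <= b -> g.[a] <= g.[b].
Proof.
move=> g_ge0 a_ge0 a_le_b; have [lo _] := nonneg_coef_secant g_ge0 a_ge0 a_le_b.
have slope_ge0 : 0 <= g^`().[a] * (b - a).
  by rewrite mulr_ge0 ?subr_ge0 //; apply/nonneg_coef_horner/a_ge0/nonneg_coef_deriv.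
lra.
Qed.
End NonnegCoef.

Section ShiftedChebyshev.
Variable R : realType.
Local Notation T := (@cheb R).

Definition cheb_shift n : {poly R} := T n \Po ('X + 1%:P).

Lemma deriv_shift (q : {poly R}) : (q \Po ('X + 1%:P))^`() = q^`() \Po ('X + 1%:P).
Proof. by rewrite deriv_comp !derivE addr0 mulr1. Qed.

Lemma cheb_shiftE n z : (cheb_shift n).[z] = cheb_val n (1 + z).
Proof. by rewrite /cheb_shift horner_comp !hornerE addrC. Qed.

Lemma cheb_shift_derE n z : (cheb_shift n)^`().[z] = cheb_der n (1 + z).
Proof. by rewrite /cheb_shift deriv_shift horner_comp !hornerE addrC. Qed.

Lemma cheb_shift_der2E n z : (cheb_shift n)^`()^`().[z] = cheb_der2 n (1 + z).
Proof. by rewrite /cheb_shift !deriv_shift horner_comp !hornerE addrC. Qed.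

(* S_n has nonnegative coefficients: S_0 = 1, S_1 - S_0 = X, and
   S_{n+2} - S_{n+1} = (S_{n+1} - S_n) + 2 X S_{n+1}. *)
Lemma cheb_shift_nonneg n : nonneg_coef (cheb_shift n).
Proof.
suff [] : nonneg_coef (cheb_shift n) /\ nonneg_coef (cheb_shift n.+1 - cheb_shift n) by [].
elim: n => [|n [S_ge0 dS_ge0]].
  rewrite /cheb_shift /= comp_polyX -polyC1 comp_polyC polyC1.
  by split=> i; [rewrite coef1; case: (i == 0)%N | rewrite addrK coefX; case: (i == 1)%N].
have S1E : cheb_shift n.+1 = cheb_shift n + (cheb_shift n.+1 - cheb_shift n).
  by rewrite addrC subrK.
have S1_ge0 : nonneg_coef (cheb_shift n.+1) by rewrite S1E; apply: nonneg_coefD.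
split => //.
have -> : cheb_shift n.+2 - cheb_shift n.+1 =
          (cheb_shift n.+1 - cheb_shift n) + 'X * (cheb_shift n.+1 *+ 2).
  rewrite /cheb_shift chebSS comp_polyB !comp_polyM comp_polyC comp_polyX.
  rewrite -[2%:P]/((2%:R : R)%:P) polyC_natr; ring.
by apply: nonneg_coefD => //; apply/nonneg_coefXM/nonneg_coefMn.
Qed.
End ShiftedChebyshev.

(* If 1 + nu <= a and a - 1 <= d then 0 < a / d <= (nu + 1) / nu, since
   a / d <= a / (a - 1) = 1 + 1 / (a - 1) <= 1 + 1 / nu. *)
Lemma ratio_le_bound (R : realFieldType) (nu a d : R) :
  0 < nu -> 1 + nu <= a -> a - 1 <= d -> 0 < a / d <= (nu + 1) / nu.
Proof.
move=> nu_gt0 a_ge a1_le_d.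
have a_gt0 : 0 < a by lra.
have d_gt0 : 0 < d by lra.
by rewrite divr_gt0 //= ler_pdivrMr // mulrAC ler_pdivlMr //; nra.
Qed.

Section QuotientBound.
Variables (R : realType) (p : nat) (nu : R).
Hypotheses (p_gt0 : (0 < p)%N) (nu_gt0 : 0 < nu).

Let h : R := nu / p%:R ^+ 2.
Let A : R := cheb_val p (1 + h).
Let B : R := cheb_der p (1 + h).
Let C : R := cheb_der2 p (1 + h).
Let S : {poly R} := cheb_shift R p.

Let p2_gt0 : 0 < p%:R ^+ 2 :> R. Proof. by rewrite exprn_gt0 // ltr0n. Qed.
Let h_gt0 : 0 < h. Proof. by rewrite divr_gt0. Qed.
Let h_p2 : h * p%:R ^+ 2 = nu. Proof. by rewrite divfK // gt_eqF. Qed.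

Let S_nonneg : nonneg_coef S. Proof. exact: cheb_shift_nonneg. Qed.
Let dS_nonneg : nonneg_coef S^`(). Proof. exact: nonneg_coef_deriv. Qed.

Let S_at0 : S.[0] = 1 /\ S^`().[0] = p%:R ^+ 2.
Proof. by rewrite cheb_shiftE cheb_shift_derE addr0; apply: cheb_at1. Qed.

(* By convexity of S on [0, h]: 1 + nu = S(0) + S'(0) h <= A <= 1 + B h. *)
Lemma cheb_delta_bounds : 1 + nu <= A /\ A - 1 <= B * h.
Proof.
have [lo hi] := nonneg_coef_secant S_nonneg (lexx 0) (ltW h_gt0).
have [S0 dS0] := S_at0.
rewrite S0 dS0 cheb_shiftE cheb_shift_derE -/A -/B subr0 mulrC h_p2 in lo hi.
by split; lra.
Qed.

(* S' is nondecreasing on [0, +oo), so B = S'(h) >= S'(0) = p^2. *)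
Lemma cheb_der_delta_lower : p%:R ^+ 2 <= B.
Proof.
have := nonneg_coef_mono dS_nonneg (lexx 0) (ltW h_gt0).
by rewrite (proj2 S_at0) cheb_shift_derE.
Qed.

Lemma cheb_delta_AC : nu <= 1 / 2 -> nu * A * C <= (nu + 1) * p%:R ^+ 4.
Proof.
move=> nu_le_half; have hp2_le : h * p%:R ^+ 2 <= 1 / 2 by rewrite h_p2.
have [A_le C_le] := cheb_growth (ltW h_gt0) hp2_le.
rewrite -/A -/C -mulrA h_p2 in A_le C_le.
have C_ge0 : 0 <= C.
  rewrite -[C]cheb_shift_der2E; apply: nonneg_coef_horner (ltW h_gt0).
  exact: nonneg_coef_deriv.
have [A_ge _] := cheb_delta_bounds.
have AC_le : A * C <= (1 + 2 * nu) * (16 / 11 * p%:R ^+ 4).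
  by apply: ler_pM => //; lra.
have nuAC_le : nu * (A * C) <= nu * ((1 + 2 * nu) * (16 / 11 * p%:R ^+ 4)).
  by rewrite ler_wpM2l // ltW.
have const_le : nu * (1 + 2 * nu) * (16 / 11) <= nu + 1.
  have nu2_le : nu * nu <= nu * (1 / 2) by rewrite ler_wpM2l // ltW.
  lra.
have p4_const_le := ler_wpM2r (exprn_ge0 4 (ler0n R p)) const_le.
rewrite -mulrA in p4_const_le; lra.
Qed.

(* For 1 + s between 1 and 1 + h, with u = h - s and D = A - T_p(1 + s), the
   convexity of S and S' gives p^2 u <= S'(s) u <= D <= B u and
   B u - D <= (S'(h) - S'(s)) u <= C u^2. *)
Lemma cheb_gap_right s : 0 <= s -> s <= h ->
  [/\ p%:R ^+ 2 * (h - s) <= A - cheb_val p (1 + s),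
      A - cheb_val p (1 + s) <= B * (h - s)
    & B * (h - s) - (A - cheb_val p (1 + s)) <= C * (h - s) ^+ 2].
Proof.
move=> s_ge0 s_le_h.
have [lo hi] := nonneg_coef_secant S_nonneg s_ge0 s_le_h.
have [_ dhi] := nonneg_coef_secant dS_nonneg s_ge0 s_le_h.
have dS_mono := nonneg_coef_mono dS_nonneg (lexx 0) s_ge0.
rewrite (proj2 S_at0) in dS_mono.
rewrite cheb_shift_der2E !cheb_shift_derE !cheb_shiftE -/A -/B -/C in lo hi dhi dS_mono.
have u_ge0 : 0 <= h - s by rewrite subr_ge0.
have dS_u := ler_wpM2r u_ge0 dS_mono; have ddS_u := ler_wpM2r u_ge0 dhi.
by rewrite expr2 mulrA; split; lra.
Qed.

(* For t <= 1 both quotients lie in (0, (nu + 1) / nu] because |T_p(t)| <= 1;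
   for t > 1 the difference is A (B u - D) / (D B u) <= A C / p^4. *)
Lemma cheb_quotient_bound t : nu <= 1 / 2 -> -1 <= t -> t < 1 + h ->
  0 < A - cheb_val p t /\
  `|A / (A - cheb_val p t) - A / (B * (1 + h - t))| <= (nu + 1) / nu.
Proof.
move=> nu_le_half t_ge t_lt.
have [A_ge A_le_Bh] := cheb_delta_bounds.
have B_ge := cheb_der_delta_lower.
have B_gt0 : 0 < B := lt_le_trans p2_gt0 B_ge.
have u_gt0 : 0 < 1 + h - t by lra.
have nu_pos : 0 < nu := nu_gt0. (* a local copy, visible to lra *)
case: (lerP t 1) => [t_le1 | t_gt1].
  have : `|cheb_val p t| <= 1 := cheb_val_le1 p t_ge t_le1.
  rewrite ler_norml => /andP[_ T_le1].
  have Bu_ge : A - 1 <= B * (1 + h - t).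
    have : B * h <= B * (1 + h - t) by apply: ler_wpM2l; [exact: ltW | lra].
    lra.
  have D_ge : A - 1 <= A - cheb_val p t by lra.
  have /andP[a_gt0 a_le] := ratio_le_bound nu_gt0 A_ge D_ge.
  have /andP[b_gt0 b_le] := ratio_le_bound nu_gt0 A_ge Bu_ge.
  by split; [lra | rewrite ler_norml; apply/andP; split; lra].
have s_ge0 : 0 <= t - 1 by lra.
have s_le_h : t - 1 <= h by lra.
move: (cheb_gap_right s_ge0 s_le_h).
have -> : 1 + (t - 1) = t by ring.
have -> : h - (t - 1) = 1 + h - t by ring.
set u := 1 + h - t; set D := A - cheb_val p t; case=> D_ge D_le gap_le.
have D_gt0 : 0 < D.
  by have pu_gt0 : 0 < p%:R ^+ 2 * u := mulr_gt0 p2_gt0 u_gt0; lra.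
split => //.
have -> : A / D - A / (B * u) = A * (B * u - D) / (D * (B * u)).
  by field; rewrite !gt_eqF //; lra.
have DBu_gt0 : 0 < D * (B * u) by rewrite !mulr_gt0 //; lra.
rewrite ler_norml; apply/andP; split.
  have K_ge0 : 0 <= (nu + 1) / nu by rewrite divr_ge0 //; lra.
  suff : 0 <= A * (B * u - D) / (D * (B * u)) by lra.
  by apply: divr_ge0 (ltW DBu_gt0); apply: mulr_ge0; lra.
rewrite ler_pdivrMr // mulrAC ler_pdivlMr //.
have gap_scaled : nu * (A * (B * u - D)) <= nu * (A * (C * u ^+ 2)).
  apply: ler_wpM2l; first exact: ltW.
  by apply: ler_wpM2l; lra.
have AC_scaled := ler_wpM2r (sqr_ge0 u) (cheb_delta_AC nu_le_half).
have p4u_le : p%:R ^+ 2 * u * p%:R ^+ 2 <= D * B.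
  by apply: ler_pM => //; [apply: mulr_ge0 | ]; apply: ltW.
have p4u2_le : p%:R ^+ 2 * u * p%:R ^+ 2 * u <= D * B * u := ler_wpM2r (ltW u_gt0) p4u_le.
have p4u2_scaled : (nu + 1) * (p%:R ^+ 4 * u ^+ 2) <= (nu + 1) * (D * B * u).
  by apply: ler_wpM2l; [lra | rewrite (_ : 4 = 2 + 2)%N // exprD; lra].
lra.
Qed.

End QuotientBound.

Theorem lemmaA5 (R : realType) (p : nat) (nu : R) :
  (1 <= p)%N -> 0 < nu -> nu <= 1 / 2 ->
  forall y : R, 0 < y -> y < (2 + nu / (p%:R ^+ 2)) * omega_pn p nu ->
    `|(1 - y^-1 * P_pn p nu y) / P_pn p nu y| <= (nu + 1) / (2 * nu).
Proof.
move=> p_gt0 nu_gt0 nu_le_half y y_gt0.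
rewrite /P_pn /omega_pn /delta_pn; set h := nu / p%:R ^+ 2.
rewrite -/(cheb_val p (1 + h)) -/(cheb_der p (1 + h)).
set A := cheb_val p (1 + h); set B := cheb_der p (1 + h).
have A_ge : 1 + nu <= A := (cheb_delta_bounds p_gt0 nu_gt0).1.
have B_ge : p%:R ^+ 2 <= B := cheb_der_delta_lower p_gt0 nu_gt0.
have A_gt0 : 0 < A by lra.
have B_gt0 : 0 < B by apply: lt_le_trans B_ge; rewrite exprn_gt0 // ltr0n.
have om_gt0 : 0 < 2 * B / A by rewrite divr_gt0 ?mulr_gt0.
set t := 1 + h - y / (2 * B / A); rewrite -/(cheb_val p t) => y_lt.
have y_om_lt : y / (2 * B / A) < 2 + h by rewrite ltr_pdivrMr.
have y_om_gt0 : 0 < y / (2 * B / A) by rewrite divr_gt0.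
have t_ge : -1 <= t by rewrite /t; lra.
have t_lt : t < 1 + h by rewrite /t; lra.
have u_gt0 : 0 < 1 + h - t by rewrite /t; lra.
have [D_gt0 quot_le] := cheb_quotient_bound p_gt0 nu_gt0 nu_le_half t_ge t_lt.
have -> : (1 - y^-1 * (2 * (1 - cheb_val p t / A))) / (2 * (1 - cheb_val p t / A)) =
          (A / (A - cheb_val p t) - A / (B * (1 + h - t))) / 2.
  have y_eq : y = 2 * B * (1 + h - t) / A by rewrite /t; field; rewrite !gt_eqF.
  by rewrite [in LHS]y_eq; field; rewrite !gt_eqF.
have -> : (nu + 1) / (2 * nu) = (nu + 1) / nu / 2 by field; rewrite gt_eqF.
by rewrite normrM normfV normr_nat ler_pM2r ?invr_gt0.
Qed.
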